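(* Let $u$ and $v$ be robots on the same ring $r$ of an $m$-partial SCS. Then $u$ prevents $v$ from starving if and only if $r$ has a tie whose length equals the length of a simple path (along $r$) between $u$ and $v$.
   Context: Let $T=\{C_1,\dots,C_n\}$ be pairwise disjoint unit circles in the plane (trajectories) and $\epsilon<0.5$ a communication range. The graph of potential links $G_\epsilon(T)$ has the circle centers as nodes and an edge $\{i,j\}$ whenever the centers of $C_i,C_j$ are at distance at most $2+\epsilon$; it is assumed connected. Points of a circle are identified with angles (modulo $2\pi$), and a robot traverses a circle in one time unit. A schedule is a pair $(f,g)$, $f:T\to[0,2\pi)$, $g:T\to\{-1,1\}$ ($1$ = counterclockwise); the robot on $C_i$ is at angle $f(C_i)+2\pi g(C_i)t$ at time $t$. A communication graph $G=(V,E)$ is a connected spanning subgraph of $G_\epsilon(T)$. The link position $\phi_{ij}$ is the point of $C_i$ closest to $C_j$. A schedule is $G$-synchronized if for every $\{i,j\}\in E$ the robot on $C_i$ is at $\phi_{ij}$ exactly when the robot on $C_j$ is at $\phi_{ji}$. An SCS with communication graph $G$ consists of $n$ robots, one per circle, moving under a $G$-synchronized schedule with $g(C_i)=-g(C_j)$ for all $\{i,j\}\in E$. Shifting protocol: when a robot on $C_i$ reaches $\phi_{ij}$ and there is no robot at $\phi_{ji}$, it moves to $C_j$ and thereafter follows the schedule of $C_j$. An $m$-partial SCS is obtained by removing $n-m$ robots, the remaining $m$ applying the shifting protocol. A surviving robot starves if every time it arrives at a link position the corresponding neighbor is absent. A ring is the closed path traversed by a starving robot (following the assigned direction on each circle and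 always shifting to the neighboring circle at link positions). The length of a path along a ring is the total length of circle arcs it traverses, with multiplicity, ignoring transitions between circles; a path in a ring follows its travel direction and may contain full tours; it is simple if it contains no full tour. The crossing point of neighboring circles $C_i,C_j$ is the midpoint of the segment joining $\phi_{ij}$ and $\phi_{ji}$; a ring crosses itself at a crossing point if it traverses it in both directions ($C_i\to C_j$ and $C_j\to C_i$). A tie of a ring is a closed sub-path of the ring starting and ending at a crossing point where the ring crosses itself, without passing through that point in between. A robot $u'$ in ring $r'$ prevents a robot $u$ in ring $r$ from starving if there is a crossing point $c$ between $r$ and $r'$ (possibly $r=r'$) and two paths of equal length, one from the position of $u$ to $c$ in $r$ and one from the position of $u'$ to $c$ in $r'$. *)

From Stdlib Require Import Reals Lra Lia List ZArith Relations.
Import ListNotations.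
Open Scope R_scope.

Definition point : Type := (R * R)%type.

Definition dist (p q : point) : R :=
  sqrt ((fst p - fst q) ^ 2 + (snd p - snd q) ^ 2).

Definition midpoint (p q : point) : point :=
  ((fst p + fst q) / 2, (snd p + snd q) / 2).

Definition is_direction_angle (th : R) (p q : point) : Prop :=
  0 <= th < 2 * PI /\
  fst q - fst p = dist p q * cos th /\
  snd q - snd p = dist p q * sin th.

Definition on_circle (c : point) (th : R) : point :=
  (fst c + cos th, snd c + sin th).

Definition congr_mod (x y L : R) : Prop := exists z : Z, x - y = IZR z * L.

(** length of the arc of a unit circle travelled from angle [a] to angle [b]
    in direction [d] (1 = counterclockwise, -1 = clockwise); it lies in
    (0, 2pi], a full tour when a = b (mod 2pi). *)
Definition sweep (d a b : R) : R :=
  let y := d * (b - a) in y + 2 * PI * IZR (up (- y / (2 * PI))).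

(** Circles are indexed by 0..n-1, [ctr i] is the centre of C_i, [E] is the
    edge relation of the communication graph G, [g] the direction part of the
    schedule, [phi i j] the angle of the link position phi_ij (point of C_i
    closest to C_j). *)
Definition scs_setting (n : nat) (ctr : nat -> point) (eps : R)
    (E : nat -> nat -> Prop) (g : nat -> R) (phi : nat -> nat -> R) : Prop :=
  eps < 1 / 2 /\
  (forall i j, (i < n)%nat -> (j < n)%nat -> i <> j -> 2 < dist (ctr i) (ctr j)) /\
  (forall i j, E i j ->
     (i < n)%nat /\ (j < n)%nat /\ i <> j /\ dist (ctr i) (ctr j) <= 2 + eps) /\
  (forall i j, E i j -> E j i) /\
  (forall i j, (i < n)%nat -> (j < n)%nat -> clos_refl_trans nat E i j) /\
  (forall i, (i < n)%nat -> g i = 1 \/ g i = -1) /\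
  (forall i j, E i j -> g i = - g j) /\
  (forall i j, E i j -> is_direction_angle (phi i j) (ctr i) (ctr j)).

Definition link_point (ctr : nat -> point) (phi : nat -> nat -> R) (i j : nat) : point :=
  on_circle (ctr i) (phi i j).

Definition crossing_point (ctr : nat -> point) (phi : nat -> nat -> R) (i j : nat) : point :=
  midpoint (link_point ctr phi i j) (link_point ctr phi j i).

(** * Rings
    A ring is described by the cyclic list [cs = [i_0; ...; i_{k-1}]] of the
    circles it visits.  Arc [t] lies on circle [cyc cs t]; it is entered from
    circle [prv cs t] at link position phi_(i_t, i_(t-1)) (transition [t],
    from [prv cs t] to [cyc cs t], through their crossing point) and left at
    link position phi_(i_t, i_(t+1)), travelling in direction [g i_t].
    Points of the ring are parametrised by arc length modulo the ring length:
    arc [t] occupies parameters [arc_start t, arc_start (t+1)] and transition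
    [t] happens at parameter [arc_start t]. *)
Definition cyc (cs : list nat) (t : nat) : nat := nth (t mod length cs) cs 0%nat.
Definition prv (cs : list nat) (t : nat) : nat := cyc cs (t + length cs - 1).

Definition arc_len (g : nat -> R) (phi : nat -> nat -> R) (cs : list nat) (t : nat) : R :=
  sweep (g (cyc cs t)) (phi (cyc cs t) (prv cs t)) (phi (cyc cs t) (cyc cs (S t))).

Definition arc_start (g : nat -> R) (phi : nat -> nat -> R) (cs : list nat) (t : nat) : R :=
  fold_right Rplus 0 (map (arc_len g phi cs) (seq 0 t)).

Definition ring_length (g : nat -> R) (phi : nat -> nat -> R) (cs : list nat) : R :=
  arc_start g phi cs (length cs).

(** [cs] is a ring: the closed path traversed by a starving robot, i.e. it
    follows the direction of each circle, shifts to the neighbouring circle at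
    every link position it meets (no link position of the current circle lies
    strictly inside an arc), and is listed exactly once (no directed
    transition repeats: the list is one period of the motion). *)
Definition is_ring (n : nat) (E : nat -> nat -> Prop) (g : nat -> R)
    (phi : nat -> nat -> R) (cs : list nat) : Prop :=
  (1 <= length cs)%nat /\
  (forall t, (t < length cs)%nat -> (cyc cs t < n)%nat /\ E (prv cs t) (cyc cs t)) /\
  (forall t j, (t < length cs)%nat -> E (cyc cs t) j ->
     arc_len g phi cs t
       <= sweep (g (cyc cs t)) (phi (cyc cs t) (prv cs t)) (phi (cyc cs t) j)) /\
  NoDup (map (fun t => (prv cs t, cyc cs t)) (seq 0 (length cs))).

Definition trans_at (ctr : nat -> point) (phi : nat -> nat -> R) (cs : list nat)
    (c : point) (t : nat) : Prop :=
  (t < length cs)%nat /\ crossing_point ctr phi (prv cs t) (cyc cs t) = c.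

Definition crosses_itself (ctr : nat -> point) (phi : nat -> nat -> R)
    (cs : list nat) (c : point) : Prop :=
  exists t1 t2, trans_at ctr phi cs c t1 /\ trans_at ctr phi cs c t2 /\
    prv cs t1 = cyc cs t2 /\ cyc cs t1 = prv cs t2.

(** a tie of length [l] at crossing point [c]: a closed sub-path of the ring
    from [c] back to [c] that does not pass through [c] in between *)
Definition is_tie (ctr : nat -> point) (g : nat -> R) (phi : nat -> nat -> R)
    (cs : list nat) (c : point) (l : R) : Prop :=
  crosses_itself ctr phi cs c /\
  exists t1 t2,
    trans_at ctr phi cs c t1 /\ trans_at ctr phi cs c t2 /\ 0 < l /\
    congr_mod (arc_start g phi cs t1 + l) (arc_start g phi cs t2) (ring_length g phi cs) /\
    (forall t x, trans_at ctr phi cs c t -> 0 < x < l ->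
       ~ congr_mod (arc_start g phi cs t1 + x) (arc_start g phi cs t) (ring_length g phi cs)).

(** a simple path (no full tour) of length [l] along ring of length [L]
    from parameter [p] to parameter [q] *)
Definition simple_path (L p q l : R) : Prop :=
  0 <= l < L /\ congr_mod (p + l) q L.

(** The robot at parameter [p'] of ring [cs'] prevents the robot at parameter
    [p] of ring [cs] from starving: there is a crossing point [c] traversed by
    the two rings in opposite directions and two paths of equal length [l],
    one from [p] to [c] along [cs] and one from [p'] to [c] along [cs']. *)
Definition prevents (ctr : nat -> point) (g : nat -> R) (phi : nat -> nat -> R)
    (cs' : list nat) (p' : R) (cs : list nat) (p : R) : Prop :=
  exists c t t' l,
    trans_at ctr phi cs c t /\ trans_at ctr phi cs' c t' /\
    prv cs t = cyc cs' t' /\ cyc cs t = prv cs' t' /\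
    0 <= l /\
    congr_mod (p + l) (arc_start g phi cs t) (ring_length g phi cs) /\
    congr_mod (p' + l) (arc_start g phi cs' t') (ring_length g phi cs').

From Stdlib Require Import Reals Lra Lia List ZArith.
Open Scope R_scope.

(* The link positions phi_ij and phi_ji face each other, so the crossing point
   of an edge is the midpoint of the two centres; as the circles are disjoint
   and edges are short, Apollonius' theorem shows that this midpoint determines
   the edge.  Since a ring repeats no directed transition, it passes through a
   crossing point at most twice, and where it crosses itself it does so by two
   transitions in opposite directions; the arc between them is a tie.  The
   robot u prevents v exactly when v reaches one of these two transitions and
   u the other after the same time, i.e. when the positions of u and v differ
   by the length of that tie modulo the length of the ring. *)

Lemma sweep_pos d a b : 0 < sweep d a b.
Proof.
  unfold sweep. set (y := d * (b - a)).
  destruct (archimed (- y / (2 * PI))) as [Hup _].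
  pose proof PI_RGT_0.
  assert (2 * PI * (- y / (2 * PI)) < 2 * PI * IZR (up (- y / (2 * PI))))
    by (apply Rmult_lt_compat_l; lra).
  replace (2 * PI * (- y / (2 * PI))) with (- y) in * by (field; lra).
  lra.
Qed.

Lemma fold_right_Rplus_init (l : list R) a :
  fold_right Rplus a l = fold_right Rplus 0 l + a.
Proof. induction l as [|x l IH]; simpl; [|rewrite IH]; lra. Qed.

Section ArcStart.
Variables (g : nat -> R) (phi : nat -> nat -> R) (cs : list nat).

Lemma arc_start_S t : arc_start g phi cs (S t) = arc_start g phi cs t + arc_len g phi cs t.
Proof.
  unfold arc_start. rewrite seq_S, map_app, fold_right_app. simpl.
  rewrite fold_right_Rplus_init. lra.
Qed.

Lemma arc_start_lt t s : (t < s)%nat -> arc_start g phi cs t < arc_start g phi cs s.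
Proof.
  induction s as [|s IH]; intros Hts; [lia|].
  rewrite arc_start_S.
  pose proof (sweep_pos (g (cyc cs s)) (phi (cyc cs s) (prv cs s)) (phi (cyc cs s) (cyc cs (S s)))).
  fold (arc_len g phi cs s) in *.
  destruct (Nat.eq_dec t s) as [->|Hne]; [lra|].
  assert (arc_start g phi cs t < arc_start g phi cs s) by (apply IH; lia).
  lra.
Qed.

Lemma arc_start_ge0 t : 0 <= arc_start g phi cs t.
Proof.
  destruct t as [|t]; [unfold arc_start; simpl; lra|].
  pose proof (arc_start_lt 0 (S t) ltac:(lia)) as Hlt.
  unfold arc_start at 1 in Hlt. simpl in Hlt. lra.
Qed.

Lemma arc_start_inj t s : arc_start g phi cs t = arc_start g phi cs s -> t = s.
Proof.
  intros Heq. destruct (Nat.lt_total t s) as [Hlt|[->|Hlt]]; auto;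
    pose proof (arc_start_lt _ _ Hlt); lra.
Qed.

End ArcStart.

Section CongrMod.
Variable L : R.

Lemma congr_mod_add a b c d x y :
  congr_mod a b L -> congr_mod c d L -> x - y = (a - b) + (c - d) -> congr_mod x y L.
Proof. intros [z1 H1] [z2 H2] H. exists (z1 + z2)%Z. rewrite plus_IZR. lra. Qed.

Lemma congr_mod_sub a b c d x y :
  congr_mod a b L -> congr_mod c d L -> x - y = (a - b) - (c - d) -> congr_mod x y L.
Proof. intros [z1 H1] [z2 H2] H. exists (z1 - z2)%Z. rewrite minus_IZR. lra. Qed.

Lemma congr_mod_eq_in_range x y : 0 <= x < L -> 0 <= y < L -> congr_mod x y L -> x = y.
Proof.
  intros Hx Hy [z Hz].
  assert (Hlo : -1 < IZR z) by (apply Rmult_lt_reg_r with L; lra).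
  assert (Hhi : IZR z < 1) by (apply Rmult_lt_reg_r with L; lra).
  apply lt_IZR in Hlo, Hhi.
  replace z with 0%Z in Hz by lia.
  simpl in Hz. lra.
Qed.

Lemma congr_mod_shift_unique a b x y : 0 <= x < L -> 0 <= y < L ->
  congr_mod (a + x) b L -> congr_mod (a + y) b L -> x = y.
Proof.
  intros Hx Hy Cx Cy. apply congr_mod_eq_in_range; auto.
  apply (congr_mod_sub _ _ _ _ _ _ Cx Cy). lra.
Qed.

Lemma congr_mod_shift_neq a x : 0 < x < L -> ~ congr_mod (a + x) a L.
Proof.
  intros Hx Cx.
  assert (C0 : congr_mod (a + 0) a L) by (exists 0%Z; lra).
  pose proof (congr_mod_shift_unique a a x 0 ltac:(lra) ltac:(lra) Cx C0). lra.
Qed.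

Lemma exists_congr_mod_shift a b : 0 < L -> exists x, 0 <= x < L /\ congr_mod (a + x) b L.
Proof.
  intros HL. set (q := (b - a) / L).
  destruct (archimed q) as [H1 H2].
  exists (b - a - (IZR (up q) - 1) * L). split.
  - assert ((IZR (up q) - 1) * L <= q * L) by (apply Rmult_le_compat_r; lra).
    assert (q * L < IZR (up q) * L) by (apply Rmult_lt_compat_r; lra).
    replace (q * L) with (b - a) in * by (unfold q; field; lra).
    lra.
  - exists (1 - up q)%Z. rewrite minus_IZR. simpl. ring.
Qed.

End CongrMod.

Lemma dist_sqr p q : dist p q ^ 2 = (fst p - fst q) ^ 2 + (snd p - snd q) ^ 2.
Proof.
  unfold dist. rewrite pow2_sqrt; auto.
  apply Rplus_le_le_0_compat; apply pow2_ge_0.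
Qed.

Lemma dist_sym p q : dist p q = dist q p.
Proof. unfold dist. f_equal. ring. Qed.

Lemma apollonius P I J K :
  midpoint I J = midpoint P K ->
  2 * (dist P I ^ 2 + dist P J ^ 2) = dist I J ^ 2 + dist P K ^ 2.
Proof.
  rewrite !dist_sqr.
  destruct P as [px py], I as [ix iy], J as [jx jy], K as [kx ky].
  unfold midpoint; simpl. intros Hm. injection Hm as Hx Hy.
  replace kx with (ix + jx - px) by lra. replace ky with (iy + jy - py) by lra.
  ring.
Qed.

Lemma midpoint_short_diagonals P I J K :
  midpoint I J = midpoint P K -> dist I J <= 5/2 -> dist P K <= 5/2 ->
  2 < dist P I -> 2 < dist P J -> False.
Proof.
  intros Hm HIJ HPK HPI HPJ.
  pose proof (apollonius P I J K Hm).
  pose proof (sqrt_pos ((fst I - fst J) ^ 2 + (snd I - snd J) ^ 2)).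
  pose proof (sqrt_pos ((fst P - fst K) ^ 2 + (snd P - snd K) ^ 2)).
  fold (dist I J) (dist P K) in *.
  nra.
Qed.

Definition opposite (cs : list nat) (t t' : nat) : Prop :=
  prv cs t = cyc cs t' /\ cyc cs t = prv cs t'.

Lemma opposite_sym cs t t' : opposite cs t t' -> opposite cs t' t.
Proof. unfold opposite. intuition. Qed.

Section Scs.
Variables (n : nat) (ctr : nat -> point) (eps : R)
  (E : nat -> nat -> Prop) (g : nat -> R) (phi : nat -> nat -> R).
Hypothesis HS : scs_setting n ctr eps E g phi.

Lemma edge_neq i j : E i j -> i <> j.
Proof. destruct HS as [_ [_ [HE _]]]. intros Hij. apply (HE i j Hij). Qed.

Lemma crossing_point_midpoint i j :
  E i j -> crossing_point ctr phi i j = midpoint (ctr i) (ctr j).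
Proof.
  intros Hij.
  destruct HS as [_ [Hdisj [HE [Hsym [_ [_ [_ Hphi]]]]]]].
  destruct (HE i j Hij) as [Hi [Hj [Hne _]]].
  pose proof (Hdisj i j Hi Hj Hne) as Hd.
  destruct (Hphi i j Hij) as [_ [A1 A2]].
  destruct (Hphi j i (Hsym i j Hij)) as [_ [B1 B2]].
  rewrite (dist_sym (ctr j)) in B1, B2.
  set (d := dist (ctr i) (ctr j)) in *.
  assert (Hcos : cos (phi i j) + cos (phi j i) = 0).
  { apply Rmult_eq_reg_l with d; lra. }
  assert (Hsin : sin (phi i j) + sin (phi j i) = 0).
  { apply Rmult_eq_reg_l with d; lra. }
  unfold crossing_point, link_point, midpoint, on_circle; simpl.
  f_equal; lra.
Qed.

Lemma edge_of_crossing_point i j a b : E i j -> E a b ->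
  crossing_point ctr phi i j = crossing_point ctr phi a b ->
  (a = i /\ b = j) \/ (a = j /\ b = i).
Proof.
  intros Hij Hab. rewrite !crossing_point_midpoint by auto. intros Hm.
  destruct HS as [Heps [Hdisj [HE _]]].
  destruct (HE i j Hij) as [Hi [Hj [_ Hd]]].
  destruct (HE a b Hab) as [Ha [Hb [Hab_neq Hd']]].
  assert (Hai : a = i \/ a = j).
  { destruct (Nat.eq_dec a i) as [|Hai]; auto. destruct (Nat.eq_dec a j) as [|Haj]; auto.
    exfalso. apply (midpoint_short_diagonals (ctr a) (ctr i) (ctr j) (ctr b)); auto; lra. }
  assert (Hbi : b = i \/ b = j).
  { destruct (Nat.eq_dec b i) as [|Hbi]; auto. destruct (Nat.eq_dec b j) as [|Hbj]; auto.
    exfalso. apply (midpoint_short_diagonals (ctr b) (ctr i) (ctr j) (ctr a)); auto.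
    - rewrite Hm. unfold midpoint. f_equal; lra.
    - lra.
    - rewrite dist_sym. lra. }
  destruct Hai, Hbi; subst; auto; contradiction.
Qed.

Section Ring.
Variable r : list nat.
Hypothesis HR : is_ring n E g phi r.

Local Notation A := (arc_start g phi r).
Local Notation L := (ring_length g phi r).
Local Notation trans_at := (trans_at ctr phi r).

Lemma ring_length_pos : 0 < L.
Proof.
  destruct HR as [Hlen _].
  pose proof (arc_start_lt g phi r 0 (length r) ltac:(lia)).
  pose proof (arc_start_ge0 g phi r 0). unfold ring_length. lra.
Qed.

Lemma arc_start_range t : (t < length r)%nat -> 0 <= A t < L.
Proof. split; [apply arc_start_ge0 | apply arc_start_lt; auto]. Qed.

Lemma transition_inj t s : (t < length r)%nat -> (s < length r)%nat ->
  prv r t = prv r s -> cyc r t = cyc r s -> t = s.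
Proof.
  intros Ht Hs Hp Hc. destruct HR as [_ [_ [_ Hnd]]].
  set (f := fun t => (prv r t, cyc r t)) in Hnd.
  apply (proj1 (NoDup_nth _ (f 0%nat)) Hnd); rewrite ?length_map, ?length_seq; auto.
  rewrite !map_nth, !seq_nth by auto. unfold f. simpl. congruence.
Qed.

Lemma opposite_neq c t t' : trans_at c t -> opposite r t t' -> t <> t'.
Proof.
  intros [Ht _] [Hp _] <-. destruct HR as [_ [Htr _]].
  apply (edge_neq (prv r t) (cyc r t)); auto. apply Htr; auto.
Qed.

Lemma trans_at_cases c t s : trans_at c t -> trans_at c s -> s = t \/ opposite r t s.
Proof.
  intros [Ht Ct] [Hs Cs]. destruct HR as [_ [Htr _]].
  rewrite <- Cs in Ct.
  destruct (edge_of_crossing_point _ _ _ _ (proj2 (Htr t Ht)) (proj2 (Htr s Hs)) Ct)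
    as [[Hp Hc]|[Hp Hc]].
  - left. apply transition_inj; auto.
  - right. split; auto.
Qed.

Lemma opposite_cases c t1 t2 s : trans_at c t1 -> trans_at c t2 -> opposite r t1 t2 ->
  trans_at c s -> s = t1 \/ s = t2.
Proof.
  intros Ht1 Ht2 [Hp Hc] Hs.
  destruct (trans_at_cases c t1 s Ht1 Hs) as [|[Hp' Hc']]; auto.
  right. apply transition_inj; [apply Hs | apply Ht2 | congruence | congruence].
Qed.

Lemma arc_gap t s : (t < length r)%nat -> (s < length r)%nat -> t <> s ->
  exists d, 0 < d < L /\ congr_mod (A t + d) (A s) L.
Proof.
  intros Ht Hs Hts.
  destruct (exists_congr_mod_shift L (A t) (A s) ring_length_pos) as [d [Hd Cd]].
  exists d. split; auto. split; [|apply Hd].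
  destruct (Rle_lt_or_eq_dec 0 d (proj1 Hd)) as [|<-]; auto.
  exfalso. apply Hts, (arc_start_inj g phi r), (congr_mod_eq_in_range L);
    try apply arc_start_range; auto.
  rewrite Rplus_0_r in Cd. exact Cd.
Qed.

Lemma tie_of_opposite c t t' : trans_at c t -> trans_at c t' -> opposite r t t' ->
  exists d, 0 < d < L /\ congr_mod (A t + d) (A t') L /\ is_tie ctr g phi r c d.
Proof.
  intros Ht Ht' Hop.
  destruct (arc_gap t t' (proj1 Ht) (proj1 Ht') (opposite_neq c t t' Ht Hop)) as [d [Hd Cd]].
  exists d. split; [exact Hd|]. split; [exact Cd|]. split.
  { exists t, t'. destruct Hop. tauto. }
  exists t, t'. split; [exact Ht|]. split; [exact Ht'|]. split; [lra|]. split; [exact Cd|].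
  intros s x Hs Hx Cx.
  destruct (opposite_cases c t t' s Ht Ht' Hop Hs) as [->| ->].
  - apply (congr_mod_shift_neq L (A t) x); auto. lra.
  - pose proof (congr_mod_shift_unique L _ _ x d ltac:(lra) ltac:(lra) Cx Cd). lra.
Qed.

Lemma opposite_of_tie c l : is_tie ctr g phi r c l ->
  exists t1 t2, trans_at c t1 /\ trans_at c t2 /\ opposite r t1 t2 /\
    congr_mod (A t1 + l) (A t2) L.
Proof.
  intros [[s1 [s2 [Hs1 [Hs2 Hop]]]] [t1 [t2 [Ht1 [Ht2 [Hl [Cl Hfree]]]]]]].
  assert (Hs12 : s1 <> s2) by exact (opposite_neq c s1 s2 Hs1 Hop).
  (* a tie cannot close up without meeting the other transition through c *)
  assert (Ht12 : t1 <> t2).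
  { intros <-.
    assert (Hother : exists s, trans_at c s /\ t1 <> s).
    { destruct (opposite_cases c s1 s2 t1 Hs1 Hs2 Hop Ht1) as [->| ->]; eauto. }
    destruct Hother as [s [Hs Hts]].
    destruct (arc_gap t1 s (proj1 Ht1) (proj1 Hs) Hts) as [x [Hx Cx]].
    destruct (Rlt_or_le x l).
    - apply (Hfree s x Hs); auto. lra.
    - apply (congr_mod_shift_neq L (A t1) l); auto. lra. }
  exists t1, t2. split; [exact Ht1|]. split; [exact Ht2|]. split; [|exact Cl].
  destruct (opposite_cases c s1 s2 t1 Hs1 Hs2 Hop Ht1) as [->| ->];
    destruct (opposite_cases c s1 s2 t2 Hs1 Hs2 Hop Ht2) as [->| ->];
    try contradiction; auto using opposite_sym.
Qed.

Lemma prevents_of_opposite c t t' p p' : trans_at c t -> trans_at c t' -> opposite r t t' ->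
  congr_mod (p' - p) (A t' - A t) L -> prevents ctr g phi r p' r p.
Proof.
  intros Ht Ht' [Hp Hc] Cp.
  destruct (exists_congr_mod_shift L p (A t) ring_length_pos) as [l [Hl Cl]].
  exists c, t, t', l. do 4 (split; [assumption|]). split; [lra|]. split; [exact Cl|].
  apply (congr_mod_add _ _ _ _ _ _ _ Cp Cl). lra.
Qed.

End Ring.
End Scs.

Theorem lemma8 (n : nat) (ctr : nat -> point) (eps : R)
    (E : nat -> nat -> Prop) (g : nat -> R) (phi : nat -> nat -> R)
    (r : list nat) (pu pv : R) :
  scs_setting n ctr eps E g phi ->
  is_ring n E g phi r ->
  0 <= pu < ring_length g phi r ->
  0 <= pv < ring_length g phi r ->
  (prevents ctr g phi r pu r pv <->
   exists c l, is_tie ctr g phi r c l /\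
     (simple_path (ring_length g phi r) pu pv l \/
      simple_path (ring_length g phi r) pv pu l)).
Proof.
  intros HS HR _ _. split.
  - intros [c [t [t' [l [Ht [Ht' [Hp [Hc [_ [Cv Cu]]]]]]]]]].
    destruct (tie_of_opposite n ctr eps E g phi HS r HR c t t' Ht Ht' (conj Hp Hc))
      as [d [Hd [Cd Htie]]].
    exists c, d. split; auto.
    right. split; [lra|].
    apply (congr_mod_sub _ (pv + l + d) (arc_start g phi r t') (pu + l) (arc_start g phi r t'));
      [apply (congr_mod_add _ _ _ _ _ _ _ Cv Cd); lra | exact Cu | lra].
  - intros [c [l [Htie [[_ Cp]|[_ Cp]]]]];
      destruct (opposite_of_tie n ctr eps E g phi HS r HR c l Htie)
        as [t1 [t2 [Ht1 [Ht2 [Hop Cl]]]]].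
    + apply (prevents_of_opposite n ctr E g phi r HR c t2 t1);
        auto using opposite_sym.
      apply (congr_mod_sub _ _ _ _ _ _ _ Cp Cl). lra.
    + apply (prevents_of_opposite n ctr E g phi r HR c t1 t2); auto.
      apply (congr_mod_sub _ _ _ _ _ _ _ Cl Cp). lra.
Qed.
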